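(* Let $K, M, N, d$ be positive integers, $\sigma^2>0$, $P>0$, weights $\omega_1,\ldots,\omega_K>0$, and channel matrices $\boldsymbol{H}_k\in\mathbb{C}^{N\times M}$, $k=1,\ldots,K$. For $\boldsymbol{V}=(\boldsymbol{V}_1,\ldots,\boldsymbol{V}_K)$ with $\boldsymbol{V}_k\in\mathbb{C}^{M\times d}$ and $\sum_{k=1}^K\|\boldsymbol{V}_k\|_F^2>0$, define $$\widetilde{\boldsymbol{F}}_k=\Big(\frac{\sigma^2}{P}\sum_{j=1}^K\|\boldsymbol{V}_j\|_F^2\Big)\boldsymbol{I}+\sum_{j\neq k}\boldsymbol{H}_k\boldsymbol{V}_j\boldsymbol{V}_j^{\mathrm{H}}\boldsymbol{H}_k^{\mathrm{H}}$$ and $$g(\boldsymbol{V})=\sum_{k=1}^K\omega_k\log\left|\boldsymbol{I}+\boldsymbol{V}_k^{\mathrm{H}}\boldsymbol{H}_k^{\mathrm{H}}\widetilde{\boldsymbol{F}}_k^{-1}\boldsymbol{H}_k\boldsymbol{V}_k\right|.$$ Then for any nonzero $\boldsymbol{V}$ and any nonzero scalar $c$, $g(\boldsymbol{V})=g(c\boldsymbol{V})$, and consequently $\nabla g(\boldsymbol{V})\perp\boldsymbol{V}$ for every nonzero $\boldsymbol{V}$, i.e. $\sum_{k=1}^K\Re\{\mathrm{tr}((\nabla_{\boldsymbol{V}_k} g(\boldsymbol{V}))^{\mathrm{H}}\boldsymbol{V}_k)\}=0$.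
   Context: $|\cdot|$ denotes the determinant, $\|\cdot\|_F$ the Frobenius norm, $\cdot^{\mathrm{H}}$ conjugate transpose. The gradient is taken with respect to the complex matrix variables viewed as real vectors, and orthogonality is with respect to the real inner product $\langle \boldsymbol{A},\boldsymbol{B}\rangle=\Re\{\mathrm{tr}(\boldsymbol{A}^{\mathrm{H}}\boldsymbol{B})\}$. *)

From mathcomp Require Import all_boot all_algebra.
From mathcomp Require Import reals exp.
From mathcomp.real_closed Require Import complex.
Set Implicit Arguments. Unset Strict Implicit. Unset Printing Implicit Defensive.
Import GRing.Theory Num.Theory.
Local Open Scope ring_scope.

Section Defs.
Variable R : realType.
Local Notation C := R[i].

Definition mxH (m n : nat) (A : 'M[C]_(m, n)) : 'M[C]_(n, m) :=
  (map_mx (@Num.conj C) A)^T.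

Definition frob2 (m n : nat) (A : 'M[C]_(m, n)) : R :=
  \sum_(i < m) \sum_(j < n) (complex.Re (A i j) ^+ 2 + complex.Im (A i j) ^+ 2).

Definition totpow (K M d : nat) (V : 'I_K -> 'M[C]_(M, d)) : R :=
  \sum_(j < K) frob2 (V j).

Definition Ftilde (K M N d : nat) (sigma2 P : R) (H : 'I_K -> 'M[C]_(N, M))
  (V : 'I_K -> 'M[C]_(M, d)) (k : 'I_K) : 'M[C]_N :=
  (real_complex R (sigma2 / P * totpow V))%:M
  + \sum_(j < K | j != k) (H k *m V j *m mxH (V j) *m mxH (H k)).

(* The determinant is of I + (Hermitian PSD), hence real >= 1; we take the
   real part of the (complex-valued) determinant before applying ln. *)
Definition gfun (K M N d : nat) (sigma2 P : R) (w : 'I_K -> R)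
  (H : 'I_K -> 'M[C]_(N, M)) (V : 'I_K -> 'M[C]_(M, d)) : R :=
  \sum_(k < K) w k * ln (complex.Re (\det (1%:M + mxH (V k) *m mxH (H k)
        *m invmx (Ftilde sigma2 P H V k) *m H k *m V k))).

Definition rinner (K M d : nat) (A B : 'I_K -> 'M[C]_(M, d)) : R :=
  \sum_(k < K) complex.Re (\tr (mxH (A k) *m B k)).

(* G is the gradient of f at V (matrices viewed as real vectors, with the
   real inner product rinner): f is Frechet differentiable at V with
   derivative W |-> <G, W>. *)
Definition is_gradient (K M d : nat) (f : ('I_K -> 'M[C]_(M, d)) -> R)
  (V G : 'I_K -> 'M[C]_(M, d)) : Prop :=
  forall eps : R, 0 < eps -> exists delta : R, 0 < delta /\
    forall W : 'I_K -> 'M[C]_(M, d), totpow W < delta ^+ 2 ->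
      `| f (fun k => V k + W k) - f V - rinner G W | <= eps * Num.sqrt (totpow W).

End Defs.

(* Every block of g is the log-determinant of I + V_k^H H_k^H F_k^{-1} H_k V_k, and
   scaling V by c multiplies F_k by |c|^2 (its noise term is proportional to the
   total power), so the factors c^*, c and |c|^{-2} cancel: g is constant on the
   rays through V.  The derivative of g along the direction V itself therefore
   vanishes, and for a gradient G this derivative is <G, V>. *)
From mathcomp Require Import all_boot all_order all_algebra.
From mathcomp Require Import reals exp.
From mathcomp.real_closed Require Import complex.
From mathcomp Require Import ring.
From mathcomp Require Import boolp.
Import Order.TTheory GRing.Theory Num.Theory.
Local Open Scope ring_scope.

Section RayInvariance.
Variable R : realType.
Local Notation C := R[i].
Local Notation "x %:C" := (real_complex R x) (format "x %:C").

Lemma mxHZ m n (c : C) (A : 'M[C]_(m, n)) : mxH (c *: A) = c^* *: mxH A.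
Proof. by apply/matrixP=> i j; rewrite !mxE rmorphM. Qed.

Lemma mxHM m n p (A : 'M[C]_(m, n)) (B : 'M[C]_(n, p)) :
  mxH (A *m B) = mxH B *m mxH A.
Proof.
apply/matrixP=> i j; rewrite !mxE rmorph_sum; apply: eq_bigr => l _.
by rewrite !mxE rmorphM mulrC.
Qed.

Lemma mulmx_mxH_row n (u : 'rV[C]_n) : (u *m mxH u) 0 0 = \sum_i u 0 i * (u 0 i)^*.
Proof. by rewrite mxE; apply: eq_bigr => i _; rewrite !mxE. Qed.

Lemma mulmx_mxH_row_ge0 n (u : 'rV[C]_n) : 0 <= (u *m mxH u) 0 0.
Proof. by rewrite mulmx_mxH_row; apply: sumr_ge0 => i _; apply: mul_conjC_ge0. Qed.

Lemma mulmx_mxH_row_eq0 n (u : 'rV[C]_n) : (u *m mxH u) 0 0 = 0 -> u = 0.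
Proof.
rewrite mulmx_mxH_row => u0; apply/rowP => i; rewrite mxE.
apply/eqP; rewrite -mul_conjC_eq0; apply/eqP.
by apply: (psumr_eq0P _ u0) => // l _; apply: mul_conjC_ge0.
Qed.

Lemma scalar_add_gram_unitmx (I : finType) (P : pred I) n m (s : C)
    (B : I -> 'M[C]_(n, m)) :
  0 < s -> s%:M + \sum_(j | P j) B j *m mxH (B j) \in unitmx.
Proof.
move=> s_gt0; set X := _ + _.
(* v X v^H = s |v|^2 + sum_j |v B_j|^2 with every summand nonnegative. *)
have kerX0 (v : 'rV[C]_n) : v *m X = 0 -> v = 0.
  move=> vX0; have : (v *m X *m mxH v) 0 0 = 0 by rewrite vX0 mul0mx mxE.
  rewrite mulmxDr mulmxDl mul_mx_scalar -scalemxAl mxE.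
  rewrite mulmx_sumr mulmx_suml summxE => /eqP.
  rewrite paddr_eq0; first last.
  - apply: sumr_ge0 => j _; rewrite mulmxA -mulmxA -mxHM.
    exact: mulmx_mxH_row_ge0.
  - by rewrite mxE mulr_ge0 ?mulmx_mxH_row_ge0 // ltW.
  case/andP=> /eqP; rewrite mxE => /eqP; rewrite mulf_eq0 gt_eqF //=.
  by move=> /eqP/mulmx_mxH_row_eq0.
rewrite -row_free_unit -kermx_eq0; apply/eqP/row_matrixP => i.
by rewrite row0; apply: kerX0; rewrite -row_mul mulmx_ker row0.
Qed.

Lemma frob2_conj m n (A : 'M[C]_(m, n)) :
  (frob2 A)%:C = \sum_i \sum_j A i j * (A i j)^*.
Proof.
rewrite /frob2 rmorph_sum; apply: eq_bigr => i _; rewrite rmorph_sum.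
by apply: eq_bigr => j _; rewrite -normCK -add_Re2_Im2.
Qed.

Lemma frob2Z m n (c : C) (A : 'M[C]_(m, n)) :
  (frob2 (c *: A))%:C = c * c^* * (frob2 A)%:C.
Proof.
rewrite !frob2_conj mulr_sumr; apply: eq_bigr => i _; rewrite mulr_sumr.
by apply: eq_bigr => j _; rewrite !mxE rmorphM; ring.
Qed.

Lemma totpowZ K M d (c : C) (V : 'I_K -> 'M[C]_(M, d)) :
  (totpow (fun k => c *: V k))%:C = c * c^* * (totpow V)%:C.
Proof.
rewrite /totpow !rmorph_sum mulr_sumr; apply: eq_bigr => j _.
exact: frob2Z.
Qed.

Lemma totpowZ_real K M d (e : R) (V : 'I_K -> 'M[C]_(M, d)) :
  totpow (fun k => e%:C *: V k) = e ^+ 2 * totpow V.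
Proof.
apply: complexI; rewrite totpowZ rmorphM rmorphXn /= conj_Creal ?expr2 //.
by apply/complex_realP; exists e.
Qed.

Lemma rinnerZ_real K M d (G V : 'I_K -> 'M[C]_(M, d)) (e : R) :
  rinner G (fun k => e%:C *: V k) = e * rinner G V.
Proof.
rewrite /rinner mulr_sumr; apply: eq_bigr => k _.
by rewrite -scalemxAr linearZ /=; case: (\tr _) => a b /=; rewrite !mul0r subr0.
Qed.

Section Channel.
Variables (K M N d : nat) (sigma2 P : R) (H : 'I_K -> 'M[C]_(N, M)).

Lemma FtildeZ (V : 'I_K -> 'M[C]_(M, d)) (c : C) k :
  Ftilde sigma2 P H (fun k => c *: V k) k = (c * c^*) *: Ftilde sigma2 P H V k.
Proof.
have noiseZ : (sigma2 / P * totpow (fun k => c *: V k))%:C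
    = c * c^* * (sigma2 / P * totpow V)%:C.
  by rewrite !rmorphM /= totpowZ; ring.
rewrite /Ftilde scalerDr scale_scalar_mx scaler_sumr noiseZ; congr (_ + _).
apply: eq_bigr => j _; rewrite mxHZ -!scalemxAr -!scalemxAl !scalerA.
by rewrite (mulrC c^*).
Qed.

Lemma Ftilde_unitmx (V : 'I_K -> 'M[C]_(M, d)) k :
  0 < sigma2 / P * totpow V -> Ftilde sigma2 P H V k \in unitmx.
Proof.
move=> s_gt0; rewrite /Ftilde.
under eq_bigr do rewrite -mulmxA -mxHM.
by apply: scalar_add_gram_unitmx; rewrite ltcR.
Qed.

Lemma gfunZ (w : 'I_K -> R) (V : 'I_K -> 'M[C]_(M, d)) (c : C) :
  0 < sigma2 / P * totpow V -> c != 0 ->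
  gfun sigma2 P w H (fun k => c *: V k) = gfun sigma2 P w H V.
Proof.
move=> s_gt0 c0; apply: eq_bigr => k _.
have cc0 : c * c^* != 0 by rewrite mulf_neq0 ?conjC_eq0.
rewrite FtildeZ mxHZ invmxZ; last by rewrite unitmxZ ?unitfE ?Ftilde_unitmx.
do ?[rewrite -scalemxAr | rewrite -scalemxAl]; rewrite !scalerA.
rewrite [X in X *: _](_ : _ = 1) ?scale1r //.
by field; rewrite conjC_eq0 c0.
Qed.

End Channel.

Lemma gradient_orthogonal_of_ray_invariant K M d
    (f : ('I_K -> 'M[C]_(M, d)) -> R) (V G : 'I_K -> 'M[C]_(M, d)) :
  0 < totpow V ->
  (forall e : R, 0 < e -> f (fun k => (1 + e)%:C *: V k) = f V) ->
  is_gradient f V G -> rinner G V = 0.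
Proof.
move=> V_gt0 f_ray gradG; set q := Num.sqrt (totpow V).
have q_gt0 : 0 < q by rewrite sqrtr_gt0.
have Vq : totpow V = q ^+ 2 by rewrite sqr_sqrtr // ltW.
apply/eqP; rewrite -normr_le0; apply/ler_addgt0Pr => eps eps_gt0; rewrite add0r.
have [delta [delta_gt0 near_V]] := gradG (eps / q) (divr_gt0 eps_gt0 q_gt0).
pose e := delta / (q + 1).
have e_gt0 : 0 < e by rewrite divr_gt0 ?addr_gt0.
have e_q_lt : e * q < delta.
  by rewrite /e mulrAC ltr_pdivrMr ?addr_gt0 // ltr_pM2l // ltrDl.
have := near_V (fun k => e%:C *: V k).
have -> : (fun k => V k + e%:C *: V k) = (fun k => (1 + e)%:C *: V k).
  by apply: funext => k; rewrite rmorphD scalerDl scale1r.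
rewrite f_ray ?addr_gt0 // subrr sub0r normrN totpowZ_real rinnerZ_real.
rewrite normrM sqrtrM ?sqr_ge0 // sqrtr_sqr !(gtr0_norm e_gt0) -/q.
have small : e ^+ 2 * totpow V < delta ^+ 2.
  by rewrite Vq -exprMn ltrXn2r // mulr_ge0 // ltW.
move=> /(_ small); rewrite mulrCA divfK ?gt_eqF //.
by rewrite ler_pM2l.
Qed.

End RayInvariance.

Theorem lemma1 (R : realType) (K M N d : nat)
  (hK : (0 < K)%N) (hM : (0 < M)%N) (hN : (0 < N)%N) (hd : (0 < d)%N)
  (sigma2 P : R) (hs : 0 < sigma2) (hP : 0 < P)
  (w : 'I_K -> R) (hw : forall k, 0 < w k)
  (H : 'I_K -> 'M[R[i]]_(N, M)) :
  (forall (V : 'I_K -> 'M[R[i]]_(M, d)) (c : R[i]),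
      0 < totpow V -> c != 0 ->
      gfun sigma2 P w H V = gfun sigma2 P w H (fun k => c *: V k))
  /\
  (forall (V G : 'I_K -> 'M[R[i]]_(M, d)),
      0 < totpow V -> is_gradient (gfun sigma2 P w H) V G ->
      rinner G V = 0).
Proof.
have noise_gt0 (V : 'I_K -> 'M[R[i]]_(M, d)) :
  0 < totpow V -> 0 < sigma2 / P * totpow V by move=> ?; rewrite !mulr_gt0 ?invr_gt0.
split=> [V c V_gt0 c0 | V G V_gt0].
  by rewrite gfunZ ?noise_gt0.
apply: gradient_orthogonal_of_ray_invariant => // e e_gt0.
by rewrite gfunZ ?noise_gt0 // gt_eqF // (ltcR 0) addr_gt0.
Qed.
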